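(* There exist a convex semialgebraic function $h:\mathbb{R}^2\to\mathbb{R}$ of class $C^1$ with $1$-Lipschitz gradient and a constant $\rho\in(0,1)$ such that $\|x-\nabla h(x)\|\le\rho\|x\|$ for all $x\in\mathbb{R}^2$, while $h$ is not strongly convex on any neighborhood of $0$ and the Clarke Jacobian $\mathrm{Jac}^c_{\nabla h}(0)$ contains a singular matrix.
   Context: Clarke Jacobian: for a locally Lipschitz $F:\mathbb{R}^N\to\mathbb{R}^m$, $\mathrm{Jac}^c_F(z)=\mathrm{conv}\{\lim_k \mathrm{Jac}_F(z_k): z_k\to z,\ F \text{ differentiable at } z_k\}$. A function is semialgebraic if its graph is a finite union of sets defined by finitely many polynomial equalities and inequalities. *)

From Stdlib Require Import Reals Lra List.
Open Scope R_scope.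

Definition R2 : Type := (R * R)%type.
Definition vadd (x y : R2) : R2 := (fst x + fst y, snd x + snd y).
Definition vsub (x y : R2) : R2 := (fst x - fst y, snd x - snd y).
Definition vscal (a : R) (x : R2) : R2 := (a * fst x, a * snd x).
Definition dot (x y : R2) : R := fst x * fst y + snd x * snd y.
Definition norm (x : R2) : R := sqrt (dot x x).
Definition origin : R2 := (0, 0).

Record Mat2 : Type := mkMat2 { m11 : R; m12 : R; m21 : R; m22 : R }.
Definition mat_apply (M : Mat2) (v : R2) : R2 :=
  (m11 M * fst v + m12 M * snd v, m21 M * fst v + m22 M * snd v).
Definition det (M : Mat2) : R := m11 M * m22 M - m12 M * m21 M.
Definition singular (M : Mat2) : Prop := det M = 0.
Definition mat_scal (a : R) (M : Mat2) : Mat2 :=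
  mkMat2 (a * m11 M) (a * m12 M) (a * m21 M) (a * m22 M).
Definition mat_add (M N : Mat2) : Mat2 :=
  mkMat2 (m11 M + m11 N) (m12 M + m12 N) (m21 M + m21 N) (m22 M + m22 N).
Definition mat_zero : Mat2 := mkMat2 0 0 0 0.

(** Semialgebraic functions R^2 -> R: the graph {(x1,x2,y) | y = h(x1,x2)}
    is a finite union of sets defined by finitely many polynomial
    equalities (p = 0) and strict inequalities (q > 0) in 3 variables. *)
Inductive poly3 : Type :=
  | PVar : nat -> poly3          (* variable 0 = x1, 1 = x2, 2 = y *)
  | PConst : R -> poly3
  | PAdd : poly3 -> poly3 -> poly3
  | PMul : poly3 -> poly3 -> poly3.

Fixpoint peval (p : poly3) (x1 x2 y : R) : R :=
  match p with
  | PVar 0 => x1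
  | PVar 1 => x2
  | PVar 2 => y
  | PVar _ => 0
  | PConst c => c
  | PAdd p q => peval p x1 x2 y + peval q x1 x2 y
  | PMul p q => peval p x1 x2 y * peval q x1 x2 y
  end.

Definition basic_holds (B : list poly3 * list poly3) (x1 x2 y : R) : Prop :=
  Forall (fun p => peval p x1 x2 y = 0) (fst B) /\
  Forall (fun q => peval q x1 x2 y > 0) (snd B).

Definition semialgebraic_fun (h : R2 -> R) : Prop :=
  exists L : list (list poly3 * list poly3),
    forall x1 x2 y : R,
      y = h (x1, x2) <-> Exists (fun B => basic_holds B x1 x2 y) L.

Definition convex_fun (h : R2 -> R) : Prop :=
  forall x y t, 0 <= t <= 1 ->
    h (vadd (vscal t x) (vscal (1 - t) y)) <= t * h x + (1 - t) * h y.

Definition in_ball (c : R2) (r : R) (x : R2) : Prop := norm (vsub x c) < r.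

Definition strongly_convex_on (h : R2 -> R) (U : R2 -> Prop) : Prop :=
  exists mu, mu > 0 /\
    forall x y t, U x -> U y -> 0 <= t <= 1 ->
      h (vadd (vscal t x) (vscal (1 - t) y))
        <= t * h x + (1 - t) * h y - mu / 2 * t * (1 - t) * (norm (vsub x y))^2.

Definition has_gradient (h : R2 -> R) (x g : R2) : Prop :=
  forall eps, eps > 0 -> exists delta, delta > 0 /\
    forall v, norm v < delta ->
      Rabs (h (vadd x v) - h x - dot g v) <= eps * norm v.

Definition has_jacobian (F : R2 -> R2) (z : R2) (J : Mat2) : Prop :=
  forall eps, eps > 0 -> exists delta, delta > 0 /\
    forall v, norm v < delta ->
      norm (vsub (vsub (F (vadd z v)) (F z)) (mat_apply J v)) <= eps * norm v.

Definition continuous2 (F : R2 -> R2) : Prop :=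
  forall x eps, eps > 0 -> exists delta, delta > 0 /\
    forall y, norm (vsub y x) < delta -> norm (vsub (F y) (F x)) < eps.

Definition limiting_jacobian (F : R2 -> R2) (z : R2) (M : Mat2) : Prop :=
  exists (zk : nat -> R2) (Jk : nat -> Mat2),
    Un_cv (fun k => fst (zk k)) (fst z) /\ Un_cv (fun k => snd (zk k)) (snd z) /\
    (forall k, has_jacobian F (zk k) (Jk k)) /\
    Un_cv (fun k => m11 (Jk k)) (m11 M) /\ Un_cv (fun k => m12 (Jk k)) (m12 M) /\
    Un_cv (fun k => m21 (Jk k)) (m21 M) /\ Un_cv (fun k => m22 (Jk k)) (m22 M).

Definition conv_hull (S : Mat2 -> Prop) (M : Mat2) : Prop :=
  exists l : list (R * Mat2),
    Forall (fun p => 0 <= fst p /\ S (snd p)) l /\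
    fold_right (fun p s => fst p + s) 0 l = 1 /\
    M = fold_right (fun p A => mat_add (mat_scal (fst p) (snd p)) A) mat_zero l.

Definition clarke_jacobian (F : R2 -> R2) (z : R2) (M : Mat2) : Prop :=
  conv_hull (limiting_jacobian F z) M.

(* h is (1/2)|x|^2 minus the Moreau envelope of the convex penalty
   f(q) = (1/2) max(|q2| - q1, 0)^2, so that grad h = prox_f.  Every analytic
   property follows from the single prox inequality x - prox_f x ∈ ∂f(prox_f x):
   it sandwiches h between its tangent plane and the tangent plane plus
   (1/2)|y - x|^2 (convexity, differentiability with gradient prox_f) and makes
   prox_f firmly nonexpansive (1-Lipschitz gradient).  On the cone
   x1 + 2|x2| <= 0 the prox is (x1/2, 0), so h = x1^2/4 there: h is flat in the
   x2-direction arbitrarily close to 0, and grad h has the singular Jacobian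
   diag(1/2, 0) at points (a, 0), a < 0, which tend to the origin. *)
From Stdlib Require Import Reals Lra Psatz List.
Import ListNotations.
Open Scope R_scope.

Ltac elim_abs :=
  repeat match goal with
  | |- context [Rabs ?t] =>
      let H := fresh "Ha" in destruct (Rle_lt_dec 0 t) as [H|H];
      [rewrite (Rabs_pos_eq t H) in * | rewrite (Rabs_left t H) in *]
  | H0 : context [Rabs ?t] |- _ =>
      let H := fresh "Ha" in destruct (Rle_lt_dec 0 t) as [H|H];
      [rewrite (Rabs_pos_eq t H) in * | rewrite (Rabs_left t H) in *]
  end.

Ltac elim_max :=
  repeat match goal with
  | |- context [Rmax ?a ?b] =>
      let H := fresh "Hm" in destruct (Rle_lt_dec a b) as [H|H];
      [rewrite (Rmax_right a b H) in * | rewrite (Rmax_left a b (Rlt_le _ _ H)) in *]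
  end.

Lemma dot_ge0 (v : R2) : 0 <= dot v v.
Proof. destruct v as [a b]; unfold dot; simpl; nra. Qed.

Lemma norm_ge0 (v : R2) : 0 <= norm v.
Proof. apply sqrt_pos. Qed.

Lemma norm_sq (v : R2) : norm v ^ 2 = dot v v.
Proof. unfold norm; rewrite pow2_sqrt; [reflexivity | apply dot_ge0]. Qed.

Lemma norm_le_of_dot_le (u v : R2) : dot u u <= dot v v -> norm u <= norm v.
Proof. intros H; apply sqrt_le_1_alt, H. Qed.

Lemma Rabs_fst_le_norm (v : R2) : Rabs (fst v) <= norm v.
Proof.
  destruct v as [a b]; unfold norm, dot; simpl.
  rewrite <- sqrt_Rsqr_abs; apply sqrt_le_1_alt; unfold Rsqr; nra.
Qed.

Lemma Rabs_snd_le_norm (v : R2) : Rabs (snd v) <= norm v.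
Proof.
  destruct v as [a b]; unfold norm, dot; simpl.
  rewrite <- sqrt_Rsqr_abs; apply sqrt_le_1_alt; unfold Rsqr; nra.
Qed.

Lemma vsub_vadd (x v : R2) : vsub (vadd x v) x = v.
Proof. destruct x, v; unfold vsub, vadd; simpl; f_equal; ring. Qed.

Lemma convex_of_supporting_plane (h : R2 -> R) (g : R2 -> R2) :
  (forall x y, h x + dot (g x) (vsub y x) <= h y) -> convex_fun h.
Proof.
  intros Hsupp x y t Ht. set (z := vadd (vscal t x) (vscal (1 - t) y)).
  pose proof (Hsupp z x) as Hx; pose proof (Hsupp z y) as Hy.
  assert (Hbal : t * dot (g z) (vsub x z) + (1 - t) * dot (g z) (vsub y z) = 0).
  { unfold z; destruct (g _), x, y; unfold dot, vsub, vadd, vscal; simpl; ring. }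
  nra.
Qed.

Lemma has_gradient_of_quadratic_sandwich (h : R2 -> R) (g : R2 -> R2) (x : R2) :
  (forall y, h x + dot (g x) (vsub y x) <= h y) ->
  (forall y, h y <= h x + dot (g x) (vsub y x) + dot (vsub y x) (vsub y x) / 2) ->
  has_gradient h x (g x).
Proof.
  intros Hlow Hup eps Heps. exists eps; split; [exact Heps |]. intros v Hv.
  pose proof (Hlow (vadd x v)) as Hl; pose proof (Hup (vadd x v)) as Hu.
  rewrite vsub_vadd in Hl, Hu; rewrite <- norm_sq in Hu.
  pose proof (norm_ge0 v).
  apply Rabs_le; split; nra.
Qed.

Lemma continuous2_of_nonexpansive (F : R2 -> R2) :
  (forall x y, norm (vsub (F x) (F y)) <= norm (vsub x y)) -> continuous2 F.
Proof.
  intros Hlip x eps Heps. exists eps; split; [exact Heps |].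
  intros y Hy. pose proof (Hlip y x). lra.
Qed.

Section ProxPotential.

Variables (f h : R2 -> R) (P : R2 -> R2).

Hypothesis prox_subgradient :
  forall x q, f (P x) + dot (vsub x (P x)) (vsub q (P x)) <= f q.

Hypothesis h_potential :
  forall x, h x = dot x x / 2 - f (P x) - dot (vsub x (P x)) (vsub x (P x)) / 2.

Lemma potential_supporting_plane (x y : R2) :
  h x + dot (P x) (vsub y x) <= h y.
Proof.
  pose proof (prox_subgradient y (P x)) as Hsub. rewrite !h_potential.
  destruct (P x) as [g1 g2], (P y) as [k1 k2], x as [a b], y as [c d].
  unfold dot, vsub in *; simpl in *.
  pose proof (pow2_ge_0 (k1 - g1)); pose proof (pow2_ge_0 (k2 - g2)). nra.
Qed.

Lemma potential_quadratic_upper_bound (x y : R2) :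
  h y <= h x + dot (P x) (vsub y x) + dot (vsub y x) (vsub y x) / 2.
Proof.
  pose proof (prox_subgradient x (P y)) as Hsub. rewrite !h_potential.
  destruct (P x) as [g1 g2], (P y) as [k1 k2], x as [a b], y as [c d].
  unfold dot, vsub in *; simpl in *.
  pose proof (pow2_ge_0 (c - k1 - (a - g1))); pose proof (pow2_ge_0 (d - k2 - (b - g2))).
  nra.
Qed.

Lemma prox_firmly_nonexpansive (x y : R2) :
  dot (vsub (P x) (P y)) (vsub (P x) (P y)) <= dot (vsub (P x) (P y)) (vsub x y).
Proof.
  pose proof (prox_subgradient x (P y)) as Hx; pose proof (prox_subgradient y (P x)) as Hy.
  destruct (P x) as [g1 g2], (P y) as [k1 k2], x as [a b], y as [c d].
  unfold dot, vsub in *; simpl in *. nra.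
Qed.

Lemma prox_nonexpansive (x y : R2) :
  norm (vsub (P x) (P y)) <= norm (vsub x y).
Proof.
  apply norm_le_of_dot_le. pose proof (prox_firmly_nonexpansive x y) as Hfirm.
  destruct (vsub (P x) (P y)) as [u1 u2], (vsub x y) as [w1 w2].
  unfold dot in *; simpl in *.
  pose proof (pow2_ge_0 (u1 - w1)); pose proof (pow2_ge_0 (u2 - w2)). nra.
Qed.

End ProxPotential.

Definition penalty (q : R2) : R := / 2 * (Rmax (Rabs (snd q) - fst q) 0) ^ 2.

Definition prox_penalty (x : R2) : R2 :=
  if Rle_dec (fst x + 2 * Rabs (snd x)) 0 then (fst x / 2, 0)
  else if Rle_dec (Rabs (snd x)) (fst x) then (fst x, snd x)
  else if Rle_dec 0 (snd x) then ((2 * fst x + snd x) / 3, (fst x + 2 * snd x) / 3)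
  else ((2 * fst x - snd x) / 3, (2 * snd x - fst x) / 3).

Definition h_penalty (x : R2) : R :=
  if Rle_dec (fst x + 2 * Rabs (snd x)) 0 then fst x ^ 2 / 4
  else if Rle_dec (Rabs (snd x)) (fst x) then (fst x ^ 2 + snd x ^ 2) / 2
  else if Rle_dec 0 (snd x) then (fst x ^ 2 + snd x ^ 2) / 2 - (snd x - fst x) ^ 2 / 6
  else (fst x ^ 2 + snd x ^ 2) / 2 - (snd x + fst x) ^ 2 / 6.

(* Tangent line of the convex function z |-> (1/2) max(z, 0)^2 at slope t. *)
Lemma penalty_ge_tangent (t L : R) (q : R2) :
  0 <= t -> L <= Rabs (snd q) - fst q -> t * L - t ^ 2 / 2 <= penalty q.
Proof.
  intros Ht HL. unfold penalty.
  set (z := Rabs (snd q) - fst q) in *.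
  pose proof (pow2_ge_0 (z - t)); pose proof (pow2_ge_0 t). elim_max; nra.
Qed.

Lemma prox_penalty_subgradient (x q : R2) :
  penalty (prox_penalty x) + dot (vsub x (prox_penalty x)) (vsub q (prox_penalty x))
    <= penalty q.
Proof.
  destruct x as [a b], q as [q1 q2]. unfold prox_penalty, dot, vsub; simpl.
  destruct (Rle_dec (a + 2 * Rabs b) 0) as [Hcone | Hcone]; simpl.
  - assert (Hbq : b * q2 <= (- a / 2) * Rabs q2).
    { assert (b * q2 <= Rabs b * Rabs q2) by (rewrite <- Rabs_mult; apply Rle_abs).
      pose proof (Rabs_pos q2). nra. }
    pose proof (Rabs_pos b).
    pose proof (penalty_ge_tangent (- a / 2) (Rabs q2 - q1) (q1, q2)) as Htan; simpl in Htan.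
    specialize (Htan ltac:(lra) ltac:(lra)).
    unfold penalty at 1; simpl. rewrite Rabs_R0, Rmax_left by lra. nra.
  - destruct (Rle_dec (Rabs b) a) as [Hcore | Hcore]; simpl.
    + unfold penalty at 1; simpl. rewrite Rmax_right by lra.
      unfold penalty. pose proof (pow2_ge_0 (Rmax (Rabs q2 - q1) 0)). nra.
    + destruct (Rle_dec 0 b) as [Hb | Hb]; simpl.
      * rewrite Rabs_pos_eq in Hcone, Hcore by lra.
        pose proof (penalty_ge_tangent ((b - a) / 3) (q2 - q1) (q1, q2)) as Htan;
          simpl in Htan.
        specialize (Htan ltac:(lra) ltac:(pose proof (Rle_abs q2); lra)).
        unfold penalty at 1; simpl. rewrite Rabs_pos_eq, Rmax_left by lra. nra.
      * rewrite Rabs_left in Hcone, Hcore by lra.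
        pose proof (penalty_ge_tangent ((- b - a) / 3) (- q2 - q1) (q1, q2)) as Htan;
          simpl in Htan.
        specialize (Htan ltac:(lra)
          ltac:(pose proof (Rle_abs (- q2)); rewrite Rabs_Ropp in *; lra)).
        unfold penalty at 1; simpl. rewrite Rabs_left, Rmax_left by lra. nra.
Qed.

Lemma h_penalty_potential (x : R2) :
  h_penalty x = dot x x / 2 - penalty (prox_penalty x)
                - dot (vsub x (prox_penalty x)) (vsub x (prox_penalty x)) / 2.
Proof.
  destruct x as [a b]. unfold h_penalty, penalty, prox_penalty, dot, vsub; simpl.
  destruct (Rle_dec (a + 2 * Rabs b) 0); simpl.
  - elim_abs; elim_max; field_simplify; nra.
  - destruct (Rle_dec (Rabs b) a); simpl.
    + elim_abs; elim_max; nra.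
    + destruct (Rle_dec 0 b); simpl; elim_abs; elim_max; nra.
Qed.

Lemma prox_penalty_residual_le (x : R2) :
  dot (vsub x (prox_penalty x)) (vsub x (prox_penalty x)) <= (2 / 3) ^ 2 * dot x x.
Proof.
  destruct x as [a b]. unfold prox_penalty, dot, vsub; simpl.
  destruct (Rle_dec (a + 2 * Rabs b) 0); simpl.
  - assert (b * b <= a * a / 4).
    { rewrite <- (Rabs_pos_eq (b * b)) by nra.
      rewrite Rabs_mult. pose proof (Rabs_pos b). nra. }
    nra.
  - destruct (Rle_dec (Rabs b) a); simpl; [nra |].
    pose proof (pow2_ge_0 (a + b)); pose proof (pow2_ge_0 (a - b)).
    destruct (Rle_dec 0 b); simpl; nra.
Qed.

Lemma prox_penalty_contraction (x : R2) :
  norm (vsub x (prox_penalty x)) <= 2 / 3 * norm x.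
Proof.
  unfold norm at 2. replace (2 / 3) with (sqrt ((2 / 3) ^ 2)) by (rewrite sqrt_pow2; lra).
  rewrite <- sqrt_mult by (try apply dot_ge0; nra).
  apply sqrt_le_1_alt, prox_penalty_residual_le.
Qed.

Lemma h_penalty_cone (a b : R) : a + 2 * Rabs b <= 0 -> h_penalty (a, b) = a ^ 2 / 4.
Proof. intros H; unfold h_penalty; simpl; destruct (Rle_dec _ _); [reflexivity | contradiction]. Qed.

Lemma prox_penalty_cone (a b : R) :
  a + 2 * Rabs b <= 0 -> prox_penalty (a, b) = (a / 2, 0).
Proof. intros H; unfold prox_penalty; simpl; destruct (Rle_dec _ _); [reflexivity | contradiction]. Qed.

(* The points (-a, a/4), (-a, -a/4) and their midpoint (-a, 0) lie in the cone,
   where h_penalty does not depend on the second coordinate. *)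
Lemma h_penalty_not_strongly_convex (r : R) :
  r > 0 -> ~ strongly_convex_on h_penalty (in_ball origin r).
Proof.
  intros Hr [mu [Hmu Hsc]]. set (a := r / 2).
  assert (Hin : forall c, Rabs c <= a / 4 -> in_ball origin r (- a, c)).
  { intros c Hc. unfold in_ball, norm, vsub, origin, dot; simpl.
    rewrite <- (sqrt_pow2 r) by lra. apply sqrt_lt_1_alt.
    assert (c * c <= a / 4 * (a / 4)).
    { rewrite <- (Rabs_pos_eq (c * c)) by nra. rewrite Rabs_mult.
      pose proof (Rabs_pos c). apply Rmult_le_compat; lra. }
    unfold a in *. split; nra. }
  specialize (Hsc (- a, a / 4) (- a, - (a / 4)) (1 / 2)
    (Hin (a / 4) ltac:(rewrite Rabs_pos_eq; unfold a; lra))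
    (Hin (- (a / 4)) ltac:(rewrite Rabs_Ropp, Rabs_pos_eq; unfold a; lra)) ltac:(lra)).
  replace (vadd (vscal (1 / 2) (- a, a / 4)) (vscal (1 - 1 / 2) (- a, - (a / 4))))
    with ((- a, 0) : R2) in Hsc by (unfold vadd, vscal; simpl; f_equal; field).
  rewrite !h_penalty_cone in Hsc
    by (try rewrite Rabs_R0; try rewrite Rabs_Ropp; try rewrite Rabs_pos_eq; unfold a; lra).
  rewrite norm_sq in Hsc. unfold dot, vsub in Hsc; simpl in Hsc.
  assert (0 < mu * (a * a)) by (apply Rmult_lt_0_compat; unfold a; nra). nra.
Qed.

Definition jac_cone : Mat2 := mkMat2 (1 / 2) 0 0 0.

Lemma prox_penalty_jacobian_cone (a : R) : a < 0 -> has_jacobian prox_penalty (a, 0) jac_cone.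
Proof.
  intros Ha eps Heps. exists (- a / 3); split; [lra |]. intros [v1 v2] Hv.
  pose proof (Rabs_fst_le_norm (v1, v2)) as Hv1; simpl in Hv1.
  pose proof (Rabs_snd_le_norm (v1, v2)) as Hv2; simpl in Hv2.
  pose proof (Rle_abs v1); pose proof (Rle_abs (- v1)); rewrite Rabs_Ropp in *.
  unfold vadd; simpl.
  rewrite prox_penalty_cone by (rewrite Rplus_0_l; lra).
  rewrite prox_penalty_cone by (rewrite Rabs_R0; lra).
  replace (vsub (vsub ((a + v1) / 2, 0) (a / 2, 0)) (mat_apply jac_cone (v1, v2)))
    with ((0, 0) : R2) by (unfold vsub, mat_apply, jac_cone; simpl; f_equal; field).
  unfold norm at 1, dot; simpl. rewrite Rmult_0_l, Rplus_0_l, sqrt_0.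
  pose proof (norm_ge0 (v1, v2)). nra.
Qed.

Lemma cv_const (c : R) : Un_cv (fun _ => c) c.
Proof. intros eps Heps. exists 0%nat. intros n _. unfold Rdist. rewrite Rminus_diag, Rabs_R0. lra. Qed.

Lemma cv_opp_inv_succ : Un_cv (fun k => - / INR (S k)) 0.
Proof.
  intros eps Heps. destruct (archimed_cor1 eps Heps) as [N [HN HN0]]. exists N. intros n Hn.
  unfold Rdist. rewrite Rminus_0_r, Rabs_Ropp.
  assert (HN0' : 0 < INR N) by (apply lt_0_INR; lia).
  assert (HNn : INR N <= INR (S n)) by (apply le_INR; lia).
  rewrite Rabs_pos_eq by (left; apply Rinv_0_lt_compat; lra).
  pose proof (Rinv_le_contravar _ _ HN0' HNn). lra.
Qed.

Lemma limiting_jacobian_prox_penalty_origin : limiting_jacobian prox_penalty origin jac_cone.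
Proof.
  exists (fun k => (- / INR (S k), 0)), (fun _ => jac_cone).
  unfold origin; cbn [fst snd].
  split; [exact cv_opp_inv_succ |]. split; [apply cv_const |].
  split; [| repeat split; apply cv_const].
  intros k. apply prox_penalty_jacobian_cone.
  assert (0 < / INR (S k)) by (apply Rinv_0_lt_compat, lt_0_INR; lia). lra.
Qed.

Lemma limiting_jacobian_in_clarke (F : R2 -> R2) (z : R2) (M : Mat2) :
  limiting_jacobian F z M -> clarke_jacobian F z M.
Proof.
  intros HM. exists [(1, M)]. split; [| split].
  - constructor; [simpl; split; [lra | exact HM] | constructor].
  - simpl; ring.
  - destruct M; unfold mat_add, mat_scal, mat_zero; simpl; f_equal; ring.
Qed.

Definition PX := PVar 0.
Definition PY := PVar 1.
Definition PZ := PVar 2.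
Definition Psub p q := PAdd p (PMul (PConst (-1)) q).
Definition Psc c p := PMul (PConst c) p.

(* The piece {e = 0, g1 >= 0, g2 >= 0}, written with strict inequalities only. *)
Definition closed_piece (e g1 g2 : poly3) : list (list poly3 * list poly3) :=
  [([e], [g1; g2]); ([e; g1], [g2]); ([e; g2], [g1]); ([e; g1; g2], [])].

Lemma closed_piece_spec (e g1 g2 : poly3) (x1 x2 y : R) :
  Exists (fun B => basic_holds B x1 x2 y) (closed_piece e g1 g2) <->
  peval e x1 x2 y = 0 /\ peval g1 x1 x2 y >= 0 /\ peval g2 x1 x2 y >= 0.
Proof.
  unfold closed_piece, basic_holds. rewrite !Exists_cons, Exists_nil. simpl.
  rewrite !Forall_cons_iff, !Forall_nil_iff.
  generalize (peval e x1 x2 y) (peval g1 x1 x2 y) (peval g2 x1 x2 y). intros a b c.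
  split.
  - intros H. repeat destruct H as [H | H]; try tauto; lra.
  - intros [Ha [Hb Hc]].
    destruct (Rle_lt_or_eq_dec 0 b (Rge_le _ _ Hb));
    destruct (Rle_lt_or_eq_dec 0 c (Rge_le _ _ Hc));
    first [left; lra | right; left; lra | right; right; left; lra
          | right; right; right; left; lra].
Qed.

Definition sq_norm_poly := PAdd (PMul PX PX) (PMul PY PY).

Definition h_penalty_graph : list (list poly3 * list poly3) :=
  closed_piece (Psub PZ (Psc (1 / 2) sq_norm_poly)) (Psub PX PY) (PAdd PX PY) ++
  closed_piece
    (Psub PZ (Psub (Psc (1 / 2) sq_norm_poly) (Psc (1 / 6) (PMul (Psub PY PX) (Psub PY PX)))))
    (Psub PY PX) (PAdd PX (Psc 2 PY)) ++
  closed_piece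
    (Psub PZ (Psub (Psc (1 / 2) sq_norm_poly) (Psc (1 / 6) (PMul (PAdd PY PX) (PAdd PY PX)))))
    (Psub (Psc (-1) PX) PY) (Psub PX (Psc 2 PY)) ++
  closed_piece (Psub PZ (Psc (1 / 4) (PMul PX PX)))
    (Psub (Psc (-1) PX) (Psc 2 PY)) (PAdd (Psc (-1) PX) (Psc 2 PY)).

Lemma h_penalty_semialgebraic : semialgebraic_fun h_penalty.
Proof.
  exists h_penalty_graph. intros x1 x2 y.
  unfold h_penalty_graph. rewrite !Exists_app, !closed_piece_spec.
  unfold sq_norm_poly, Psub, Psc, PX, PY, PZ; simpl.
  unfold h_penalty; simpl.
  destruct (Rle_dec (x1 + 2 * Rabs x2) 0);
  [| destruct (Rle_dec (Rabs x2) x1); [| destruct (Rle_dec 0 x2)]];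
  elim_abs; split; intros H; repeat destruct H as [H | H];
  try (right; right; right; nra); try (left; nra);
  try (right; left; nra); try (right; right; left; nra); nra.
Qed.

Theorem proposition4 :
  exists (h : R2 -> R) (grad : R2 -> R2) (rho : R),
    semialgebraic_fun h /\
    convex_fun h /\
    (forall x, has_gradient h x (grad x)) /\
    continuous2 grad /\
    (forall x y, norm (vsub (grad x) (grad y)) <= norm (vsub x y)) /\
    0 < rho < 1 /\
    (forall x, norm (vsub x (grad x)) <= rho * norm x) /\
    (forall r, r > 0 -> ~ strongly_convex_on h (in_ball origin r)) /\
    (exists M, clarke_jacobian grad origin M /\ singular M).
Proof.
  pose proof prox_penalty_subgradient as Hsub.
  pose proof h_penalty_potential as Hpot.
  pose proof (prox_nonexpansive _ _ Hsub) as Hlip.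
  exists h_penalty, prox_penalty, (2 / 3).
  split; [exact h_penalty_semialgebraic |].
  split; [exact (convex_of_supporting_plane _ _ (potential_supporting_plane _ _ _ Hsub Hpot)) |].
  split.
  { intros x. apply has_gradient_of_quadratic_sandwich.
    - exact (potential_supporting_plane _ _ _ Hsub Hpot x).
    - exact (potential_quadratic_upper_bound _ _ _ Hsub Hpot x). }
  split; [exact (continuous2_of_nonexpansive _ Hlip) |].
  split; [exact Hlip |].
  split; [lra |].
  split; [exact prox_penalty_contraction |].
  split; [exact h_penalty_not_strongly_convex |].
  exists jac_cone. split.
  - exact (limiting_jacobian_in_clarke _ _ _ limiting_jacobian_prox_penalty_origin).
  - unfold singular, det, jac_cone; simpl; ring.
Qed.
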